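(* Let $M$ be a $3$-connected simple matroid with $r(M)\ge 4$, and let $K=x_1,\dots,x_n,y_1,\dots,y_n$ ($n\ge3$) be a carambole of $M$ with filament $L=\{y_1,\dots,y_n\}$. Then $M/L$ is $3$-connected. In particular, every triangle of $M$ that meets $\{x_1,\dots,x_n,y_1,\dots,y_n\}$ is contained in $L$.
   Context: A line of $M$ is a rank-$2$ set. For $n\ge3$, a sequence $x_1,\dots,x_n,y_1,\dots,y_n$ of elements of $M$ is a carambole of $M$ if $L:=\{y_1,\dots,y_n\}$ is a line of $M$ with $n$ distinct elements such that $\mathrm{si}(M/L)$ (the simplification) is $3$-connected, and, for each $i$, $(L-y_i)\cup x_i$ is a cocircuit of $M$. $L$ is called the filament of the carambole. *)

(* Matroids on a finite ground set E : {set T}, given by a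
   rank function r : {set T} -> nat (only its values on subsets of E matter). *)
From mathcomp Require Import ssreflect ssrfun ssrbool eqtype ssrnat seq choice fintype finfun bigop finset.
Set Implicit Arguments. Unset Strict Implicit. Unset Printing Implicit Defensive.

Section Matroids.
Variable T : finType.

Definition is_matroid (E : {set T}) (r : {set T} -> nat) : Prop :=
  [/\ (forall X : {set T}, X \subset E -> r X <= #|X|),
      (forall X Y : {set T}, X \subset Y -> Y \subset E -> r X <= r Y) &
      (forall X Y : {set T}, X \subset E -> Y \subset E ->
         r (X :|: Y) + r (X :&: Y) <= r X + r Y)].

(* contraction M/L : ground set E \ L, rank X |-> r(X u L) - r(L) *)
Definition contract (r : {set T} -> nat) (L : {set T}) : {set T} -> nat :=
  fun X => r (X :|: L) - r L.

Definition dual_rank (E : {set T}) (r : {set T} -> nat) : {set T} -> nat :=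
  fun X => #|X| + r (E :\: X) - r E.

Definition indep (r : {set T} -> nat) (X : {set T}) : bool := r X == #|X|.

Definition circuit (E : {set T}) (r : {set T} -> nat) (C : {set T}) : Prop :=
  [/\ C \subset E, ~~ indep r C &
      forall D : {set T}, D \proper C -> indep r D].

Definition cocircuit (E : {set T}) (r : {set T} -> nat) (C : {set T}) : Prop :=
  circuit E (dual_rank E r) C.

Definition triangle (E : {set T}) (r : {set T} -> nat) (C : {set T}) : Prop :=
  circuit E r C /\ #|C| = 3.

Definition simple (E : {set T}) (r : {set T} -> nat) : Prop :=
  (forall x, x \in E -> r [set x] = 1) /\
  (forall x y, x \in E -> y \in E -> x != y -> r [set x; y] = 2).

(* Tutte connectivity: no k-separation for k = 1, 2.
   A k-separation is (X, E\X) with |X|,|E\X| >= k and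
   r(X) + r(E\X) - r(E) <= k - 1. *)
Definition three_connected (E : {set T}) (r : {set T} -> nat) : Prop :=
  forall (k : nat) (X : {set T}), 1 <= k <= 2 -> X \subset E ->
    ~ [/\ k <= #|X|, k <= #|E :\: X| & r X + r (E :\: X) < r E + k].

(* simplification: delete loops and keep, from each parallel class, the
   element of least enum_rank (a canonical choice; si is unique up to
   isomorphism).  si(M) is the restriction of M to this set. *)
Definition simp_ground (E : {set T}) (r : {set T} -> nat) : {set T} :=
  [set x in E | (r [set x] != 0) &&
     [forall y in E, ((r [set y] != 0) && (r [set x; y] == 1)) ==>
                      (enum_rank x <= enum_rank y)]].

Definition si_three_connected (E : {set T}) (r : {set T} -> nat) : Prop :=
  three_connected (simp_ground E r) r.

Definition line (E : {set T}) (r : {set T} -> nat) (L : {set T}) : Prop :=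
  L \subset E /\ r L = 2.

Definition filament (n : nat) (y : 'I_n -> T) : {set T} := [set y i | i : 'I_n].

Definition carambole (E : {set T}) (r : {set T} -> nat) (n : nat)
    (x y : 'I_n -> T) : Prop :=
  let L := filament y in
  [/\ 3 <= n,
      (forall i, x i \in E) /\ (forall i, y i \in E),
      injective y /\
      line E r L,
      si_three_connected (E :\: L) (contract r L) &
      forall i, cocircuit E r ((L :\ y i) :|: [set x i])].

End Matroids.

From mathcomp Require Import ssreflect ssrfun ssrbool eqtype ssrnat fintype finset.
From mathcomp Require Import zify.
Set Implicit Arguments. Unset Strict Implicit. Unset Printing Implicit Defensive.

(* Write D_i = (L - y_i) ∪ {x_i} and H_i = E - D_i.  Each H_i is a hyperplane
   containing y_i, while y_j ∈ D_i for j ≠ i, so no y_j is spanned by a subset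
   of H_i.  This forbids a loop e of M/L: if e ≠ x_1 then y_2 would be spanned
   by {e, y_1}; if e = x_1 then the line e ∪ L contains the cocircuit D_1,
   which yields a 2-separation.  If e, f were parallel in M/L, pigeonhole gives
   i ≠ j with x_i, x_j both in {e, f} or both outside it.  In the first case
   E - ({e, f} ∪ L) lies in H_i ∩ H_j, so has rank at most r(M) - 2, and a
   2-separation follows; in the second, y_i and y_j lie on the line through
   e and f, which then contains L and makes e a loop of M/L.  So M/L is simple,
   hence equal to its 3-connected simplification.  A triangle C meeting the
   carambole but not contained in L either misses L, and then x_i ∈ D_i is
   spanned by C - x_i ⊆ H_i; or meets L, and then r(C ∪ L) ≤ 4 - |C ∩ L|
   whereas simplicity of M/L gives r(C ∪ L) = 2 + |C - L| = 5 - |C ∩ L|. *)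

(* [lia] case-splits on every boolean hypothesis in the context, which is
   exponential on the many set-membership facts below; [arith] hands it only
   the arithmetic ones. *)
Ltac arith :=
  repeat match goal with h : ?P |- _ =>
    lazymatch P with is_true (leq _ _) => fail | @eq nat _ _ => fail | _ => clear h end
  end; lia.

Section Rank.
Variables (T : finType) (E : {set T}) (r : {set T} -> nat).
Hypothesis hM : is_matroid E r.
Implicit Types (X Y A B D G : {set T}) (a d : T).

Lemma rank_le_card X : X \subset E -> r X <= #|X|.
Proof. by case: hM => h _ _; apply: h. Qed.

Lemma rank_mono X Y : X \subset Y -> Y \subset E -> r X <= r Y.
Proof. by case: hM => _ h _; apply: h. Qed.

Lemma rank_submod X Y :
  X \subset E -> Y \subset E -> r (X :|: Y) + r (X :&: Y) <= r X + r Y.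
Proof. by case: hM => _ _ h; apply: h. Qed.

Lemma rank_setU1 X a : X \subset E -> a \in E -> r (a |: X) <= r X + 1.
Proof.
move=> hX ha; have haE : [set a] \subset E by rewrite sub1set.
by have := rank_submod haE hX; have := rank_le_card haE; rewrite cards1; lia.
Qed.

Lemma rank_compl X : X \subset E -> r E <= r X + r (E :\: X).
Proof.
move=> hX; have := rank_submod hX (subsetDl E X).
have -> : X :|: E :\: X = E.
  by apply/setP => z; rewrite !inE; case: (boolP (z \in X)) => // /(subsetP hX).
have -> : X :&: (E :\: X) = set0 by apply/setP => z; rewrite !inE; case: (z \in X).
by have := rank_le_card (sub0set E); rewrite cards0; lia.
Qed.

Lemma closure_mono A B a :
  A \subset B -> B \subset E -> a \in E -> r (a |: A) <= r A -> r (a |: B) <= r B.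
Proof.
move=> hAB hB ha haA.
have haAE : a |: A \subset E by rewrite subUset sub1set ha (subset_trans hAB hB).
have := rank_submod haAE hB.
have -> : (a |: A) :|: B = a |: B by rewrite -setUA (setUidPr hAB).
have : r A <= r ((a |: A) :&: B).
  by apply: rank_mono; [rewrite subsetI hAB subsetUr | rewrite subIset // hB orbT].
lia.
Qed.

Lemma cocircuit_spanning D d : cocircuit E r D -> d \in D -> r (d |: (E :\: D)) = r E.
Proof.
case=> hDE _ hmin hd.
have hEDd : E :\: (D :\ d) = d |: (E :\: D).
  apply/setP => z; rewrite !inE.
  case: (eqVneq z d) => [->|_] /=; last by rewrite andbC.
  by rewrite (subsetP hDE).
have hle : r (d |: (E :\: D)) <= r E.
  by apply: rank_mono; rewrite // subUset sub1set (subsetP hDE) ?subsetDl.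
case: (posnP #|D :\ d|) => [/eqP | hpos].
  by rewrite cards_eq0 => /eqP hD0; rewrite -hEDd hD0 setD0.
have := hmin _ (properD1 hd); rewrite /indep /dual_rank hEDd => /eqP; lia.
Qed.

Lemma cocircuit_compl_rank D : cocircuit E r D -> r (E :\: D) + 1 = r E.
Proof.
move=> hD; case: (hD) => hDE hdep _.
have hle : r (E :\: D) <= r E by apply: rank_mono; rewrite ?subsetDl.
have /set0Pn [d hd] : D != set0.
  by apply: contraNneq hdep => ->; rewrite /indep /dual_rank setD0 cards0 subnn.
have := cocircuit_spanning hD hd; have := rank_setU1 (subsetDl E D) (subsetP hDE d hd).
by move: hdep; rewrite /indep /dual_rank; lia.
Qed.

Lemma cocircuit_notin_closure D A d :
  cocircuit E r D -> A \subset E :\: D -> d \in D -> r A < r (d |: A).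
Proof.
move=> hD hA hd; rewrite ltnNge; apply/negP => hcl.
have hdE : d \in E by case: hD => hDE _ _; apply: (subsetP hDE).
have := closure_mono hA (subsetDl E D) hdE hcl.
by rewrite (cocircuit_spanning hD hd) -(cocircuit_compl_rank hD); lia.
Qed.

Lemma rank_compl_cocircuits D1 D2 d G :
  cocircuit E r D1 -> cocircuit E r D2 -> d \in D1 -> d \notin D2 ->
  G \subset E :\: D1 -> G \subset E :\: D2 -> r G + 2 <= r E.
Proof.
move=> hD1 hD2 hd1 hd2 hG1 hG2.
have hdE : d \in E by case: hD1 => hDE _ _; apply: (subsetP hDE).
have hdG : d |: G \subset E :\: D2 by rewrite subUset sub1set inE hd2 hdE.
have := rank_mono hdG (subsetDl E D2); have := cocircuit_notin_closure hD1 hG1 hd1.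
by rewrite -(cocircuit_compl_rank hD2); lia.
Qed.

Lemma triangle_rank C : triangle E r C -> r C = 2.
Proof.
case=> [[hCE hdep hmin] hC3].
have /set0Pn [c hc] : C != set0 by rewrite -card_gt0 hC3.
have := hmin _ (properD1 hc); rewrite /indep => /eqP.
have := rank_mono (subD1set C c) hCE; have := rank_le_card hCE.
by move: hdep hC3; rewrite /indep (cardsD1 c C) hc; lia.
Qed.
End Rank.

Section ThreeConnected.
Variables (T : finType) (E : {set T}) (r : {set T} -> nat).
Hypotheses (hM : is_matroid E r) (h3 : three_connected E r).
Implicit Types (X D : {set T}).

Lemma three_connected_sep X :
  X \subset E -> 2 <= #|X| -> 2 <= #|E :\: X| -> r E + 1 < r X + r (E :\: X).
Proof.
move=> hX h1 h2; rewrite ltnNge; apply/negP => h.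
by apply: (@h3 2 X) => //; split => //; lia.
Qed.

Lemma three_connected_sep_rank X :
  X \subset E -> 2 <= #|X| -> 2 <= r (E :\: X) -> r E + 1 < r X + r (E :\: X).
Proof.
move=> hX h1 h2; apply: three_connected_sep => //.
exact: leq_trans h2 (rank_le_card hM (subsetDl E X)).
Qed.

Lemma cocircuit_sub_rank D X : 4 <= r E -> cocircuit E r D ->
  D \subset X -> X \subset E -> 2 <= #|X| -> 2 < r X.
Proof.
move=> hr hD hDX hX hX2; rewrite ltnNge; apply/negP => hrX.
have hXD := rank_mono hM (setDS E hDX) (subsetDl E D).
have hDr := cocircuit_compl_rank hM hD; have hc := rank_compl hM hX.
have hXr : 2 <= r (E :\: X) by lia.
by have := three_connected_sep_rank hX hX2 hXr; lia.
Qed.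
End ThreeConnected.

Lemma simp_ground_simple (T : finType) (E : {set T}) (r : {set T} -> nat) :
  simple E r -> simp_ground E r = E.
Proof.
case=> h1 h2; apply/setP => z; rewrite inE.
case hz: (z \in E) => //=; rewrite h1 //=.
apply/forall_inP => w hw; apply/implyP => /andP [_ /eqP hzw].
by case: (eqVneq z w) => [-> //|hne]; rewrite h2 in hzw.
Qed.

Section Carambole.
Variables (T : finType) (E : {set T}) (r : {set T} -> nat).
Hypotheses (hM : is_matroid E r) (h3 : three_connected E r) (hs : simple E r).
Hypothesis hr : 4 <= r E.
Variables (n : nat) (x y : 'I_n -> T).
Hypothesis hK : carambole E r x y.
Implicit Types (A C : {set T}) (e f : T) (i j : 'I_n).

Local Notation L := (filament y).
Local Notation D i := ((filament y :\ y i) :|: [set x i]).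

Let n_ge3 : 3 <= n. Proof. by case: hK. Qed.
Let y_in_E i : y i \in E. Proof. by case: hK => _ [_ hy]. Qed.
Let y_inj : injective y. Proof. by case: hK => _ _ []. Qed.
Let L_sub_E : L \subset E. Proof. by case: hK => _ _ [_ []]. Qed.
Let rank_L : r L = 2. Proof. by case: hK => _ _ [_ []]. Qed.
Let cocircuit_D i : cocircuit E r (D i). Proof. by case: hK. Qed.

Lemma mem_filament i : y i \in L.
Proof. exact: imset_f. Qed.

Lemma card_filament : #|L| = n.
Proof. by rewrite card_imset // card_ord. Qed.

Lemma y_in_D i j : j != i -> y j \in D i.
Proof. by move=> hji; rewrite !inE mem_filament (inj_eq y_inj) hji. Qed.

Lemma in_compl_D i z : z \in E :\: L -> z != x i -> z \in E :\: D i.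
Proof. by rewrite !inE negb_or => /andP [/negPf -> ->] ->; rewrite andbF. Qed.

Lemma x_notin_filament i : x i \notin L.
Proof.
apply/negP => hxL.
have hDL : D i \subset L by rewrite subUset subsetDl sub1set.
have := cocircuit_sub_rank hM h3 hr (cocircuit_D i) hDL L_sub_E.
by rewrite card_filament rank_L; arith.
Qed.

Lemma y_in_compl_D i : y i \in E :\: D i.
Proof.
rewrite !inE eqxx y_in_E /= andbT; apply: contraNneq (x_notin_filament i) => <-.
exact: mem_filament.
Qed.

Lemma rank_filament_setU1 e : e \in E :\: L -> r (e |: L) = 3.
Proof.
move=> he; have /setDP [heE heL] := he.
have heLE : e |: L \subset E by rewrite subUset sub1set heE L_sub_E.
apply/eqP; rewrite eqn_leq; apply/andP; split.
  by have := rank_setU1 hM L_sub_E heE; rewrite rank_L.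
rewrite ltnNge; apply/negP => hle.
have n0 : 0 < n by arith.
have n1 : 1 < n by arith.
pose i0 := Ordinal n0; pose i1 := Ordinal n1.
case: (eqVneq (x i0) e) => [hxe | hxe].
  have hD : D i0 \subset e |: L.
    by rewrite subUset hxe sub1set setU11 (subset_trans (subsetDl _ _) (subsetUr _ _)).
  have := cocircuit_sub_rank hM h3 hr (cocircuit_D i0) hD heLE.
  by have := subset_leq_card (subsetUr [set e] L); rewrite card_filament; arith.
have hA : [set e; y i0] \subset E :\: D i0.
  by rewrite subUset !sub1set y_in_compl_D in_compl_D // eq_sym.
have := cocircuit_notin_closure hM (cocircuit_D i0) hA (y_in_D (isT : i1 != i0)).
have -> : r [set e; y i0] = 2.
  by apply: hs.2 => //; apply: contraNneq heL => ->; apply: mem_filament.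
have : r (y i1 |: [set e; y i0]) <= r (e |: L).
  by apply: (rank_mono hM) => //; rewrite !subUset !sub1set !inE !mem_filament eqxx !orbT.
arith.
Qed.

Lemma rank_filament_setU2_x_in e f i j :
  e \in E :\: L -> f \in E :\: L -> e != f -> i != j ->
  x i \in [set e; f] -> x j \in [set e; f] -> 3 < r ([set e; f] :|: L).
Proof.
move=> he hf hef hij hxi hxj.
have /setDP [heE heL] := he; have /setDP [hfE hfL] := hf.
have hSE : [set e; f] :|: L \subset E by rewrite !subUset !sub1set heE hfE L_sub_E.
have hS2 : 2 <= #|[set e; f] :|: L|.
  by have := subset_leq_card (subsetUr [set e; f] L); rewrite card_filament; arith.
have hGE : E :\: ([set e; f] :|: L) \subset E := subsetDl _ _.
have hGD k : x k \in [set e; f] -> E :\: ([set e; f] :|: L) \subset E :\: D k.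
  move=> hxk; apply/subsetP => z /setDP [hzE hzS]; apply: in_compl_D.
    by rewrite inE hzE andbT; apply: contra hzS => hzL; rewrite inE hzL orbT.
  by apply: contraNneq hzS => ->; rewrite inE hxk.
have hyj : y j \notin D j by have := y_in_compl_D j; rewrite inE => /andP [].
have hG : r (E :\: ([set e; f] :|: L)) + 2 <= r E.
  by apply: (rank_compl_cocircuits hM (cocircuit_D i) (cocircuit_D j) (y_in_D _)) hyj
    (hGD i hxi) (hGD j hxj); rewrite eq_sym.
rewrite ltnNge; apply/negP => hS.
case: (leqP 2 (r (E :\: ([set e; f] :|: L)))) => hG2.
  by have := three_connected_sep_rank hM h3 hSE hS2 hG2; arith.
(* Now r(M) = 4 and (e + L, f + (E - ({e, f} + L))) is a 2-separation. *)
have hEeL : E :\: (e |: L) = f |: (E :\: ([set e; f] :|: L)).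
  apply/setP => z; rewrite !inE; case: (eqVneq z f) => [->|_] /=.
    by rewrite eq_sym (negPf hef) (negPf hfL) hfE.
  by rewrite orbF.
have hfG : f \notin E :\: ([set e; f] :|: L) by rewrite !inE eqxx orbT.
have hG1 : 0 < #|E :\: ([set e; f] :|: L)|.
  by have := rank_compl hM hSE; have := rank_le_card hM hGE; arith.
have heL2 : 2 <= #|e |: L|.
  by have := subset_leq_card (subsetUr [set e] L); rewrite card_filament; arith.
have heLE : e |: L \subset E by rewrite subUset sub1set heE L_sub_E.
have := three_connected_sep h3 heLE heL2; rewrite hEeL cardsU1 hfG.
by rewrite (rank_filament_setU1 he); have := rank_setU1 hM hGE hfE; arith.
Qed.

Lemma rank_filament_setU2_x_out e f i j :
  e \in E :\: L -> f \in E :\: L -> e != f -> i != j ->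
  x i \notin [set e; f] -> x j \notin [set e; f] -> 3 < r ([set e; f] :|: L).
Proof.
move=> he hf hef hij hxi hxj.
have /setDP [heE heL] := he; have /setDP [hfE hfL] := hf.
have hSE : [set e; f] :|: L \subset E by rewrite !subUset !sub1set heE hfE L_sub_E.
rewrite ltnNge; apply/negP => hS.
have hline k l : l != k -> x k \notin [set e; f] -> r [set e; f; y k] <= 2.
  move=> hlk hxk.
  have hA : [set e; f; y k] \subset E :\: D k.
    by rewrite !subUset !sub1set y_in_compl_D !in_compl_D //;
      apply: contraNneq hxk => ->; rewrite !inE eqxx ?orbT.
  have := cocircuit_notin_closure hM (cocircuit_D k) hA (y_in_D hlk).
  have : r (y l |: [set e; f; y k]) <= r ([set e; f] :|: L).
    apply: (rank_mono hM) => //.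
    by rewrite !subUset !sub1set !in_setU !in_set1 !mem_filament !eqxx !orbT.
  arith.
have hji : j != i by rewrite eq_sym.
have := hline i j hji hxi; have := hline j i hij hxj.
have hAiE : [set e; f; y i] \subset E by rewrite !subUset !sub1set heE hfE y_in_E.
have hAjE : [set e; f; y j] \subset E by rewrite !subUset !sub1set heE hfE y_in_E.
have hUE : [set e; f; y i] :|: [set e; f; y j] \subset E by rewrite subUset hAiE hAjE.
have := rank_submod hM hAiE hAjE; have := rank_submod hM L_sub_E hUE.
have : r [set e; f] <= r ([set e; f; y i] :&: [set e; f; y j]).
  apply: (rank_mono hM _ (subset_trans (subsetIl _ _) hAiE)).
  by rewrite subsetI !subsetUl.
have : r [set y i; y j] <= r (L :&: ([set e; f; y i] :|: [set e; f; y j])).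
  apply: (rank_mono hM _ (subset_trans (subsetIl _ _) L_sub_E)).
  by rewrite subsetI !subUset !sub1set !in_setU !in_set1 !mem_filament !eqxx !orbT.
have : r (e |: L) <= r (L :|: ([set e; f; y i] :|: [set e; f; y j])).
  apply: (rank_mono hM); last by rewrite subUset L_sub_E hUE.
  by rewrite subUset sub1set !in_setU !in_set1 eqxx !orbT subsetUl.
have ref : r [set e; f] = 2 by apply: hs.2.
have ryy : r [set y i; y j] = 2 by apply: hs.2; rewrite ?(inj_eq y_inj).
by rewrite (rank_filament_setU1 he) rank_L; arith.
Qed.

Lemma rank_filament_setU2 e f :
  e \in E :\: L -> f \in E :\: L -> e != f -> r ([set e; f] :|: L) = 4.
Proof.
move=> he hf hef; have /setDP [heE _] := he.
apply/eqP; rewrite eqn_leq; apply/andP; split.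
  have hfLE : f |: L \subset E by rewrite subUset sub1set (subsetP (subsetDl E L)) ?L_sub_E.
  by rewrite -setUA; have := rank_setU1 hM hfLE heE; rewrite (rank_filament_setU1 hf).
have [i [j hij hxij]] :
    exists i, exists2 j, i != j & (x i \in [set e; f]) = (x j \in [set e; f]).
  apply/injectivePn; apply: contraL n_ge3 => /injectiveP /leq_card.
  by rewrite card_ord card_bool; arith.
case hxi: (x i \in [set e; f]); move: hxij; rewrite hxi => hxj.
  exact: rank_filament_setU2_x_in hij hxi _.
by apply: rank_filament_setU2_x_out hij _ _; rewrite ?hxi -?hxj.
Qed.

Lemma rank_filament_setU A :
  A \subset E :\: L -> 0 < #|A| <= 2 -> r (A :|: L) = #|A| + 2.
Proof.
move=> hA /andP [hA0 hA2].
have [/cards1P [e hAe] | /cards2P [e [f [hef hAef]]]] : #|A| == 1 \/ #|A| == 2.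
    by arith.
  by move: hA; rewrite hAe sub1set cards1 => /rank_filament_setU1.
move: hA; rewrite hAef subUset !sub1set cards2 hef => /andP [he hf].
exact: rank_filament_setU2.
Qed.

Lemma contract_simple : simple (E :\: L) (contract r L).
Proof.
split=> [e he | e f he hf hef]; rewrite /contract rank_L.
  by rewrite rank_filament_setU1.
by rewrite rank_filament_setU2.
Qed.

Lemma triangle_sub_filament C i :
  triangle E r C -> (x i \in C) || (y i \in C) -> C \subset L.
Proof.
move=> hC hxy; have hrC := triangle_rank hM hC.
case: hC => [[hCE _ hmin] hC3].
have rank_proper (B : {set T}) : B \proper C -> r B = #|B| by move/hmin/eqP.
rewrite -setD_eq0; apply/negPn/negP => hCL.
case: (set_0Vmem (C :&: L)) => [hCL0 | [w hw]].
  have hxC : x i \in C.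
    case/orP: hxy => // hyC.
    by move/setP/(_ (y i)): hCL0; rewrite !inE hyC mem_filament.
  have hA : C :\ x i \subset E :\: D i.
    apply/subsetP => z /setD1P [hzx hzC]; apply: in_compl_D => //.
    rewrite inE (subsetP hCE _ hzC) andbT; apply/negP => hzL.
    by move/setP/(_ z): hCL0; rewrite !inE hzC hzL.
  have hxD : x i \in D i by rewrite !inE eqxx orbT.
  have hC2 : #|C :\ x i| = 2 by move: hC3; rewrite (cardsD1 (x i)) hxC; arith.
  have := cocircuit_notin_closure hM (cocircuit_D i) hA hxD.
  by rewrite setD1K // hrC rank_proper ?properD1 // hC2.
have hCLp : C :&: L \proper C.
  rewrite properEneq subsetIl andbT; apply: contraNneq hCL => hCIL.
  by rewrite setD_eq0 -hCIL subsetIr.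
have hk1 : 0 < #|C :&: L| by apply/card_gt0P; exists w.
have hk2 := proper_card hCLp.
have hA12 : 0 < #|C :\: L| <= 2 by rewrite cardsD hC3; arith.
have := rank_filament_setU (setSD L hCE) hA12.
have -> : C :\: L :|: L = C :|: L.
  by apply/setP => z; rewrite !inE; case: (z \in L); rewrite ?orbT ?orbF ?andbT.
have := rank_submod hM hCE L_sub_E.
rewrite hrC rank_L (rank_proper _ hCLp) cardsD hC3; arith.
Qed.

End Carambole.

Theorem corollary4p3 (T : finType) (E : {set T}) (r : {set T} -> nat)
  (hM : is_matroid E r) (h3 : three_connected E r) (hs : simple E r)
  (hr : 4 <= r E) (n : nat) (x y : 'I_n -> T)
  (hK : carambole E r x y) :
  three_connected (E :\: filament y) (contract r (filament y)) /\
  (forall C : {set T}, triangle E r C ->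
     (exists i : 'I_n, (x i \in C) || (y i \in C)) ->
     C \subset filament y).
Proof.
split; last by move=> C hC [i hi]; apply: (triangle_sub_filament hM h3 hs hr hK hC hi).
have hsimp := simp_ground_simple (contract_simple hM h3 hs hr hK).
by case: hK => _ _ _ hsi _; rewrite /si_three_connected hsimp in hsi.
Qed.
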